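(* Let $U$ be a coherent $P$-ultrafilter on the Cohen algebra $\mathbb{C}_\omega$ such that $a_i\notin U$ for all $i<\omega$. Then for every strictly increasing function $\varphi\colon\omega\to\omega$, the set $C_\varphi\cap U$ is cofinal in $U$, i.e. for every $u\in U$ there is $c\in C_\varphi\cap U$ with $c\le u$.
   Context: $\mathbb{C}_\omega$ is the Cohen algebra, the unique atomless complete Boolean algebra with a countable dense subalgebra. Fix an enumeration $\{d_k:k<\omega\}$ of a countable dense subalgebra with $d_0=\mathbb{0}$, and fix an infinite maximal antichain $\{a_i:i<\omega\}$ of $\mathbb{C}_\omega$. For a strictly increasing $\varphi\colon\omega\to\omega$, $C_\varphi\subseteq\mathbb{C}_\omega$ is the set of all $c$ for which there is a strictly increasing sequence $\langle m_j:j<\omega\rangle$ with $\{a_i\wedge c: i<\varphi(m_j)\}\subseteq\{d_k: k<\varphi(m_j)\}$ for all $j<\omega$. An ultrafilter $U$ on a complete c.c.c. Boolean algebra $\mathbb{B}$ is a coherent $P$-ultrafilter if for every maximal antichain $P$ of $\mathbb{B}$ and every family $\{X_n:n<\omega\}$ of subsets of $P$ with $\bigvee X_n\in U$ for all $n$, there exists $Y\subseteq P$ with $\bigvee Y\in U$ and $Y\setminus X_n$ finite for every $n<\omega$. *)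

From HB Require Import structures.
From mathcomp Require Import all_boot all_order.
From mathcomp Require Import boolp classical_sets cardinality.
Set Implicit Arguments. Unset Strict Implicit. Unset Printing Implicit Defensive.
Import Order.TTheory.
Local Open Scope order_scope.

(* Boolean algebras are MathComp's complemented distributive lattices with
   top and bottom: ctbDistrLatticeType. *)
Section BA.
Context {disp : Order.disp_t} {T : ctbDistrLatticeType disp}.

Definition is_sup (S : set T) (s : T) : Prop :=
  (forall x, S x -> x <= s) /\ (forall y, (forall x, S x -> x <= y) -> s <= y).

Definition complete_BA : Prop := forall S : set T, exists s, is_sup S s.

Definition atomless : Prop :=
  forall x : T, x != \bot -> exists y, \bot < y /\ y < x.

Definition subalgebra (D : set T) : Prop :=
  D \bot /\ D \top /\ (forall x y, D x -> D y -> D (Order.meet x y)) /\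
  (forall x y, D x -> D y -> D (Order.join x y)) /\
  (forall x, D x -> D (Order.compl x)).

Definition dense (D : set T) : Prop :=
  forall x : T, x != \bot -> exists2 y, D y & \bot < y /\ y <= x.

Definition max_antichain (P : set T) : Prop :=
  (forall p, P p -> p != \bot) /\
  (forall p q, P p -> P q -> p <> q -> Order.meet p q = \bot) /\
  (forall x, x != \bot -> exists2 p, P p & Order.meet x p != \bot).

Definition ultrafilter (U : set T) : Prop :=
  U \top /\ ~ U \bot /\
  (forall x y, U x -> x <= y -> U y) /\
  (forall x y, U x -> U y -> U (Order.meet x y)) /\
  (forall x, U x \/ U (Order.compl x)).

Definition join_in (U : set T) (X : set T) : Prop :=
  exists s, is_sup X s /\ U s.

Definition coherent_P_ultrafilter (U : set T) : Prop :=
  ultrafilter U /\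
  forall (P : set T) (X : nat -> set T),
    max_antichain P ->
    (forall n, (forall x, X n x -> P x) /\ join_in U (X n)) ->
    exists Y : set T,
      (forall y, Y y -> P y) /\ join_in U Y /\
      forall n, finite_set (fun y => Y y /\ ~ X n y).

(* C_phi, for the enumeration d of the dense subalgebra and antichain a *)
Definition C_phi (d a : nat -> T) (phi : nat -> nat) : set T :=
  fun c => exists m : nat -> nat, (forall j, m j < m j.+1)%N /\
    forall j i, (i < phi (m j))%N ->
      exists2 k, (k < phi (m j))%N & Order.meet (a i) c = d k.

End BA.

From HB Require Import structures.
From mathcomp Require Import all_boot all_order.
From mathcomp Require Import boolp classical_sets cardinality.
Import Order.TTheory Order.CTBDistrLatticeTheory.
Set Implicit Arguments. Unset Strict Implicit.

(* Fix u in U.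
   1. Density and a greedy selection along the enumeration d give a maximal
      antichain P inside D = range d refining (a_i) and deciding u
      (every p in P lies below some a_i and below u or below ~u).
   2. Since no a_i is in U, each tail X_n (members of P below u and below
      some a_i with i >= n) has its join in U; coherence yields Y within P
      with \/Y in U and Y \ X_n finite for every n.
   3. Put W = {p in Y | p <= u}.  For Q a set of indices, the "piece"
      c_Q = \/{p in W | p <= a_i for some i in Q} satisfies a_i /\ c_Q =
      c_{i} for i in Q and a_i /\ c_Q = 0 otherwise; each c_{i} is a finite
      join of members of D (finiteness of Y \ X_(i+1)), say d (f i).
   4. A combinatorial lemma on nat colours the indices with two colours so
      that each colour class is closed under f below phi (m_j) for some
      increasing m_j.  The two pieces of the colour classes cover
      \/Y /\ u, which is in U, so one of them is in U; it is below u and,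
      by 3 and 4, in C_phi. *)

Lemma incr_geq_id (h : nat -> nat) : (forall n, h n < h n.+1) -> forall n, n <= h n.
Proof. by move=> h_incr; elim=> // n IH; apply: leq_ltn_trans IH (h_incr n). Qed.

Fixpoint prefix_max (f : nat -> nat) i :=
  if i is j.+1 then maxn (prefix_max f j) (f i) else f 0.

Lemma prefix_max_ge f i : f i <= prefix_max f i.
Proof. by case: i => //= i; apply: leq_maxr. Qed.

Lemma prefix_max_mono f : {homo prefix_max f : i j / i <= j}.
Proof. by apply: homo_leq leqnn leq_trans _ => i; apply: leq_maxl. Qed.

(* Cutting nat into consecutive blocks at values cut t of phi, so far apart
   that f maps [0, cut t] below the next cut. *)
Section Blocks.
Variables (phi f : nat -> nat).
Hypothesis phi_incr : forall n, phi n < phi n.+1.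

Fixpoint stage t :=
  if t is s.+1 then (stage s + prefix_max f (phi (stage s))).+1 else 0.

Definition cut t := phi (stage t).

Lemma stage_incr t : stage t < stage t.+1.
Proof. by rewrite /= ltnS leq_addr. Qed.

Lemma cut_incr t : cut t < cut t.+1.
Proof. exact: homo_ltn ltn_trans phi_incr _ _ (stage_incr t). Qed.

Lemma cut_gap t : prefix_max f (cut t) < cut t.+1.
Proof. by apply: leq_trans (incr_geq_id phi_incr _); rewrite /= ltnS leq_addl. Qed.

Lemma cut_unbounded i : exists t, i < cut t.
Proof. by exists i.+1; apply: leq_trans (incr_geq_id cut_incr i.+1). Qed.

(* block i: the index t of the block [cut t.-1, cut t) containing i. *)
Definition block i := ex_minn (cut_unbounded i).

Lemma block_spec i : i < cut (block i) /\ forall t, i < cut t -> block i <= t.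
Proof. by rewrite /block; case: ex_minnP. Qed.

Lemma closed_below_cut i t : block i < t -> f i < cut t.
Proof.
case: t => // t; rewrite ltnS => bit.
have [ib _] := block_spec i.
have cut_le : cut (block i) <= cut t.
  by apply: homo_leq leqnn leq_trans _ _ _ bit => s; apply/ltnW/cut_incr.
have it : i <= cut t by apply/ltnW/(leq_trans ib).
by apply: leq_ltn_trans (cut_gap t); apply: leq_trans (prefix_max_ge f i) (prefix_max_mono f it).
Qed.

End Blocks.

(* Colouring the blocks by parity: below a cut ending a block of the other
   colour, each colour class is mapped by f below that cut. *)
Lemma two_coloring (phi f : nat -> nat) : (forall n, phi n < phi n.+1) ->
  exists (col : nat -> bool) (m : bool -> nat -> nat), forall b,
    (forall j, m b j < m b j.+1) /\
    forall j i, col i = b -> i < phi (m b j) -> f i < phi (m b j).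
Proof.
move=> phi_incr; pose end_block b j := (2 * j).+1 + b.
exists (fun i => odd (block f phi_incr i)), (fun b j => stage phi f (end_block b j)) => b.
have parity j : odd (end_block b j) = ~~ b by rewrite /end_block oddD oddS oddM; case: b.
split=> [j|j i coli].
  by apply: (homo_ltn ltn_trans (stage_incr phi f)); rewrite ltn_add2r ltnS ltn_pmul2l.
have [_ bmin] := block_spec f phi_incr i.
move=> /bmin bi; apply: closed_below_cut; rewrite ltn_neqAle bi andbT.
by apply/eqP => e; move: coli; rewrite e parity; case: (b).
Qed.

Fixpoint greedy (G : nat -> Prop) (R : nat -> nat -> Prop) n : seq nat :=
  if n is m.+1 then
    let s := greedy G R m in
    if `[< G m /\ forall j, j \in s -> R j m >] then m :: s else s
  else [::].

Lemma greedyE G R n k : k \in greedy G R n =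
  (k < n) && `[< G k /\ forall j, j \in greedy G R k -> R j k >].
Proof.
elim: n => [//|n IH] /=.
case: ifP => h; rewrite ?inE IH ltnS (leq_eqVlt k n);
  case: eqP => [->|ne] //=; rewrite ?ltnn ?h //.
Qed.

Definition greedy_sel G R k := k \in greedy G R k.+1.

Lemma greedy_selP G R k : greedy_sel G R k <->
  G k /\ (forall j, j < k -> greedy_sel G R j -> R j k).
Proof.
have memE j : (j \in greedy G R k) = (j < k) && greedy_sel G R j.
  by rewrite greedyE /greedy_sel greedyE ltnSn.
rewrite {1}/greedy_sel greedyE ltnSn /=.
split=> [/asboolP [Gk Rk]|[Gk Rk]].
  by split=> // j jk sj; apply: Rk; rewrite memE jk.
by apply/asboolP; split=> // j; rewrite memE => /andP [jk sj]; apply: Rk.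
Qed.

Lemma greedy_selection (G : nat -> Prop) (R : nat -> nat -> Prop) :
  exists sel : nat -> bool,
    [/\ forall k, sel k -> G k,
         forall j k, j < k -> sel j -> sel k -> R j k &
         forall k, G k -> ~~ sel k -> exists2 j, j < k & sel j /\ ~ R j k].
Proof.
exists (greedy_sel G R); split.
- by move=> k /greedy_selP [].
- by move=> j k jk sj /greedy_selP [_]; apply.
- move=> k Gk /negP nsk; apply: contrapT => none; apply: nsk.
  apply/greedy_selP; split=> // j jk sj.
  by apply: contrapT => nR; apply: none; exists j.
Qed.

Local Open Scope order_scope.

Section BooleanAlgebra.
Context {disp : Order.disp_t} {T : ctbDistrLatticeType disp}.
Implicit Types (x y u p : T) (S D P : set T).

Lemma disjoint_below x y p : x <= ~` y -> p <= y -> x `&` p = \bot.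
Proof. by move=> xy py; apply/eqP; rewrite disj_leC (le_trans xy) // leC. Qed.

Lemma disjoint_split x u : x `&` u = \bot -> x `&` ~` u = \bot -> x = \bot.
Proof.
move=> /eqP; rewrite disj_leC => xu /eqP; rewrite disj_leC complK => xu'.
by apply/eqP; rewrite -lex0 -(meetxC u) lexI xu'.
Qed.

Lemma le_disjoint_bot p x y : x <= ~` y -> p <= x -> p <= y -> p = \bot.
Proof.
move=> xy px py; apply/eqP; rewrite -lex0 -(meetCx y).
by rewrite lexI py (le_trans px).
Qed.

Lemma nonzero_decided_part z u :
  z != \bot -> exists w, [/\ w != \bot, w <= z & w <= u \/ w <= ~` u].
Proof.
move=> z0; have [zu0|zu] := eqVneq (z `&` u) \bot.
  exists (z `&` ~` u); split; [|exact: leIl|right; exact: leIr].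
  by apply: contra z0 => /eqP /(disjoint_split zu0) ->.
by exists (z `&` u); split; [|exact: leIl|left; exact: leIr].
Qed.

Lemma is_sup_unique S s s' : is_sup S s -> is_sup S s' -> s = s'.
Proof. by move=> [ub lub] [ub' lub']; apply: le_anti; rewrite lub // lub'. Qed.

Lemma is_sup_seq (l : seq T) : is_sup [set` l] (\join_(x <- l) x).
Proof.
rewrite /is_sup; split=> [x xl|y ub]; first exact: (joins_sup_seq id xl).
by apply/joinsP_seq => x xl _; apply: ub.
Qed.

Lemma subalgebra_finite_sup D S s :
  subalgebra D -> finite_set S -> (forall x, S x -> D x) -> is_sup S s -> D s.
Proof.
move=> [D0 [_ [_ [DU _]]]] /finite_seqP [l ->] SD sup_s.
rewrite (is_sup_unique sup_s (is_sup_seq l)) big_seq.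
by apply: big_ind => // x xl; apply: SD.
Qed.

Lemma meet_sup_decided Y y u s :
  is_sup Y y -> (forall p, Y p -> p <= u \/ p <= ~` u) ->
  is_sup (fun p => Y p /\ p <= u) s -> y `&` u <= s.
Proof.
move=> [_ y_lub] Y_u [s_ub _].
have y_split : y <= s `|` ~` u.
  apply: y_lub => p Yp; case: (Y_u p Yp) => pu.
    by apply: le_trans (leUl _ _); apply: s_ub.
  exact: le_trans pu (leUr _ _).
by rewrite (le_trans (leI2 y_split (lexx u))) // meetUl meetCx joinx0 leIl.
Qed.

Lemma max_antichain_meet0 P x :
  max_antichain P -> (forall p, P p -> x `&` p = \bot) -> x = \bot.
Proof.
move=> [_ [_ Pmax]] x_disj; apply: contrapT => /eqP /Pmax [p Pp].
by rewrite x_disj // eqxx.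
Qed.

Lemma antichain_disj (a : nat -> T) :
  injective a -> max_antichain (range a) -> forall i j, i <> j -> a i <= ~` a j.
Proof.
move=> a_inj [_ [a_antichain _]] i j ij.
by rewrite -disj_leC a_antichain // => /a_inj.
Qed.

Definition sup_of (Hc : complete_BA (T := T)) S : T := sval (cid (Hc S)).

Lemma sup_ofP Hc S : is_sup S (sup_of Hc S).
Proof. exact: svalP (cid (Hc S)). Qed.

Section Ultrafilter.
Variable U : set T.
Hypothesis HU : ultrafilter U.

Lemma uf_compl x : ~ U x -> U (~` x).
Proof. by case: HU => [_ [_ [_ [_ Ucmp]]]] nx; case: (Ucmp x). Qed.

Lemma uf_meet x y : U x -> U y -> U (x `&` y).
Proof. by case: HU => [_ [_ [_ [Umeet _]]]]; apply: Umeet. Qed.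

Lemma uf_le x y : U x -> x <= y -> U y.
Proof. by case: HU => [_ [_ [Uup _]]]; apply: Uup. Qed.

Lemma uf_neq0 x : U x -> x != \bot.
Proof. by case: HU => [_ [U0 _]] Ux; apply/eqP => x0; apply: U0; rewrite -x0. Qed.

Lemma uf_meets (I : Type) (r : seq I) (F : I -> T) :
  (forall i, U (F i)) -> U (\meet_(i <- r) F i).
Proof. by case: HU => [UT [_ [_ [Umeet _]]]] UF; apply: big_ind. Qed.

Lemma uf_join x y : U (x `|` y) -> U x \/ U y.
Proof.
move=> Uxy; apply: contrapT => /not_orP [nx ny].
have := uf_neq0 (uf_meet Uxy (uf_meet (uf_compl nx) (uf_compl ny))).
by rewrite -complU meetxC eqxx.
Qed.

End Ultrafilter.
End BooleanAlgebra.

(* Step 1: a maximal antichain A refined inside a dense set range d by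
   elements deciding u, selected greedily along d. *)
Lemma dense_refinement {disp : Order.disp_t} {T : ctbDistrLatticeType disp}
    (d : nat -> T) (A : set T) (u : T) :
  dense (range d) -> max_antichain A ->
  exists P : set T, [/\ max_antichain P, (forall p, P p -> range d p),
    (forall p, P p -> exists2 q, A q & p <= q) &
    (forall p, P p -> p <= u \/ p <= ~` u)].
Proof.
move=> d_dense [_ [_ A_max]].
pose G k := [/\ d k != \bot, exists2 q, A q & d k <= q & d k <= u \/ d k <= ~` u].
have [sel [selG selR selN]] := greedy_selection G (fun j k => d j `&` d k = \bot).
pose P p := exists2 k, sel k & p = d k.
exists P; split; last first.
- by move=> _ [k /selG [] _ _ ? ->].
- by move=> _ [k /selG [] _ ? _ ->].
- by move=> _ [k _ ->]; exists k.
split; [|split].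
- by move=> _ [k /selG [] ? _ _ ->].
- move=> _ _ [j sj ->] [k sk ->] djk.
  case: (ltngtP j k) => [jk|kj|jk]; first exact: selR.
    by rewrite meetC; apply: selR.
  by case: djk; rewrite jk.
- move=> x x0; have [q Aq xq0] := A_max x x0.
  have [w [w0 wxq wu]] := nonzero_decided_part u xq0.
  have [_ [k _ <-] [dk0 dkw]] := d_dense w w0.
  have dkx : d k <= x by rewrite (le_trans dkw) // (le_trans wxq) // leIl.
  have Gk : G k.
    split; first by rewrite -lt0x.
      by exists q; rewrite // (le_trans dkw) // (le_trans wxq) // leIr.
    by case: wu => wu; [left|right]; apply: le_trans wu.
  have [sk|nsk] := boolP (sel k).
    by exists (d k); [exists k|rewrite (meet_idPr dkx) -lt0x].
  have [j jk [sj djk]] := selN k Gk nsk.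
  exists (d j); first by exists j.
  apply: contra_notN djk => /eqP xdj; apply/eqP; rewrite -lex0 -xdj.
  by rewrite meetC leI2.
Qed.

Section Pieces.
Context {disp : Order.disp_t} {T : ctbDistrLatticeType disp}.
Variable a : nat -> T.
Hypothesis a_disj : forall i j, i <> j -> a i <= ~` a j.
Variable W : set T.

Definition piece_set (Q : nat -> Prop) : set T :=
  fun p => W p /\ exists2 i, Q i & p <= a i.

Lemma piece_meet_in (Q : nat -> Prop) i c ci :
  is_sup (piece_set Q) c -> is_sup (piece_set (eq i)) ci -> Q i ->
  a i `&` c = ci.
Proof.
move=> [c_ub c_lub] [ci_ub ci_lub] Qi; apply: le_anti; apply/andP; split.
  have c_split : c <= ci `|` ~` a i.
    apply: c_lub => p [Wp [j Qj pj]]; have [eq_ij|ne_ij] := eqVneq i j.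
      by rewrite (le_trans _ (leUl _ _)) //; apply: ci_ub; split=> //; exists j.
    by rewrite (le_trans _ (leUr _ _)) // (le_trans pj) // a_disj //; apply/eqP; rewrite eq_sym.
  by rewrite (le_trans (leI2 (lexx _) c_split)) // meetUr meetxC joinx0 leIr.
apply: ci_lub => p [Wp [_ <- pi]]; rewrite lexI pi /=.
by apply: c_ub; split=> //; exists i.
Qed.

Lemma piece_meet_out (Q : nat -> Prop) i c :
  is_sup (piece_set Q) c -> ~ Q i -> a i `&` c = \bot.
Proof.
move=> [_ c_lub] nQi; apply/eqP; rewrite meetC disj_leC.
apply: c_lub => p [_ [j Qj pj]]; rewrite (le_trans pj) // a_disj //.
by move=> ji; apply: nQi; rewrite -ji.
Qed.

Lemma pieces_cover (col : nat -> bool) s c0 c1 :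
  (forall p, W p -> exists i, p <= a i) -> is_sup W s ->
  is_sup (piece_set (fun i => col i = false)) c0 ->
  is_sup (piece_set (fun i => col i = true)) c1 -> s <= c0 `|` c1.
Proof.
move=> W_a [_ s_lub] [c0_ub _] [c1_ub _]; apply: s_lub => p Wp.
have [i pi] := W_a p Wp.
case coli: (col i); [apply: le_trans (leUr _ _)|apply: le_trans (leUl _ _)].
  by apply: c1_ub; split=> //; exists i.
by apply: c0_ub; split=> //; exists i.
Qed.

End Pieces.

Section Tails.
Context {disp : Order.disp_t} {T : ctbDistrLatticeType disp}.
Variables (a : nat -> T) (U P : set T) (u : T).
Hypotheses (HU : ultrafilter U) (Ua : forall i, ~ U (a i)) (Uu : U u).
Hypotheses (P_max : max_antichain P) (P_a : forall p, P p -> exists i, p <= a i).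
Hypothesis P_u : forall p, P p -> p <= u \/ p <= ~` u.
Hypothesis a_disj : forall i j, i <> j -> a i <= ~` a j.

Definition tail n : set T :=
  fun p => [/\ P p, p <= u & exists2 i, (n <= i)%N & p <= a i].

(* Otherwise ~(\/X_n) /\ u /\ ~a_0 /\ ... /\ ~a_(n-1) would be in U, yet it
   is disjoint from every member of P. *)
Lemma tail_sup_in n s : is_sup (tail n) s -> U s.
Proof.
move=> [s_ub _]; apply: contrapT => nUs.
pose z := ~` s `&` u `&` \meet_(i <- iota 0 n) ~` a i.
have Uz : U z.
  apply: (uf_meet HU); first by apply: (uf_meet HU) => //; apply: uf_compl.
  by apply: uf_meets => // i; apply: uf_compl.
suff z0 : z = \bot by move: (uf_neq0 HU Uz); rewrite z0 eqxx.
apply: (max_antichain_meet0 P_max) => p Pp.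
have [i pi] := P_a Pp.
case: (P_u Pp) => pu; last first.
  by rewrite meetC; apply: (disjoint_below pu); rewrite /z -meetA meetCA leIl.
have [ni|ilt] := leqP n i.
  by apply: (disjoint_below (y := s)); [rewrite /z -meetA leIl|apply: s_ub; split=> //; exists i].
apply: (disjoint_below (y := a i)) pi; apply: le_trans (leIr _ _) _.
by apply: meets_inf_seq; rewrite ?mem_iota.
Qed.

(* The members of Y below u and a_i avoid tail (i+1), so there are only
   finitely many of them when Y \ tail (i+1) is finite. *)
Lemma piece_at_finite (Y : set T) i :
  (forall p, Y p -> P p) -> finite_set (fun p => Y p /\ ~ tail i.+1 p) ->
  finite_set (piece_set a (fun p => Y p /\ p <= u) (eq i)).
Proof.
move=> Y_P Y_fin; apply: sub_finite_set Y_fin => p [[Yp pu] [_ <- pi]].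
split=> // -[Pp _ [j ij pj]].
have := P_max.1 p Pp; rewrite (le_disjoint_bot (a_disj (j := j) _) pi pj) ?eqxx //.
by move=> eij; rewrite eij ltnn in ij.
Qed.

End Tails.

Lemma C_phi_intro {disp : Order.disp_t} {T : ctbDistrLatticeType disp}
    (d a : nat -> T) (phi f m : nat -> nat) (Q : nat -> Prop) (c : T) :
  d 0%N = \bot -> (forall j, (m j < m j.+1)%N) ->
  (forall j i, Q i -> (i < phi (m j))%N -> (f i < phi (m j))%N) ->
  (forall i, Q i -> a i `&` c = d (f i)) -> (forall i, ~ Q i -> a i `&` c = \bot) ->
  C_phi d a phi c.
Proof.
move=> d0 m_incr Q_closed c_in c_out; exists m; split=> // j i ilt.
have [Qi|nQi] := pselect (Q i); first by exists (f i); [apply: Q_closed|apply: c_in].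
by exists 0%N; [apply: leq_ltn_trans ilt|rewrite c_out].
Qed.

Theorem mainTheorem10 (disp : Order.disp_t) (T : ctbDistrLatticeType disp)
    (d : nat -> T) (a : nat -> T) (U : set T)
    (HT_complete : complete_BA (T := T))
    (HT_atomless : atomless (T := T))
    (Hd_sub : subalgebra (range d))
    (Hd_dense : dense (range d))
    (Hd0 : d 0%N = \bot)
    (Ha_inj : injective a)
    (Ha_max : max_antichain (range a))
    (HU : coherent_P_ultrafilter U)
    (HUa : forall i, ~ U (a i)) :
  forall phi : nat -> nat, (forall n, phi n < phi n.+1)%N ->
  forall u, U u -> exists c, C_phi d a phi c /\ U c /\ c <= u.
Proof.
move=> phi phi_incr u Uu; have [U_uf U_coh] := HU.
pose sup := sup_of HT_complete.
have a_disj := antichain_disj Ha_inj Ha_max.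
have [P [P_max P_d P_a P_u]] := dense_refinement u Hd_dense Ha_max.
have P_at p : P p -> exists i, p <= a i by move=> /P_a [_ [i _ <-]]; exists i.
have tail_P n p : tail a P u n p -> P p by case.
have tail_in n : join_in U (tail a P u n).
  exists (sup (tail a P u n)); split; first exact: sup_ofP.
  exact: (tail_sup_in U_uf HUa Uu P_max P_at P_u (sup_ofP _ _)).
have [Y [Y_P [[y [y_sup Uy]] Y_fin]]] :=
  U_coh P (tail a P u) P_max (fun n => conj (tail_P n) (tail_in n)).
pose W p := Y p /\ p <= u.
have W_a p : W p -> exists i, p <= a i by move=> [/Y_P /P_at].
(* step 3: the piece below a_i is a finite join from D *)
have /choice [f f_piece] i : exists k, d k = sup (piece_set a W (eq i)).
  have : range d (sup (piece_set a W (eq i))).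
    apply: (subalgebra_finite_sup Hd_sub _ _ (sup_ofP _ _)); last first.
      by move=> p [[/Y_P /P_d]].
    exact: (piece_at_finite P_max a_disj Y_P (Y_fin i.+1)).
  by case=> k _ dk; exists k.
have [col [m col_m]] := two_coloring f phi_incr.
pose c b := sup (piece_set a W (fun i => col i = b)).
have [b Ucb] : exists b, U (c b).
  have : U (c false `|` c true).
    apply: (uf_le U_uf (uf_meet U_uf Uy Uu)).
    apply: le_trans (meet_sup_decided y_sup _ (sup_ofP _ W)) _.
      by move=> p /Y_P /P_u.
    exact: pieces_cover W_a (sup_ofP _ _) (sup_ofP _ _) (sup_ofP _ _).
  by case/(uf_join U_uf) => ?; [exists false|exists true].
have [m_incr m_closed] := col_m b.
exists (c b); split; [|split=> //].
  apply: (C_phi_intro Hd0 m_incr m_closed) => i coli.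
    by rewrite f_piece (piece_meet_in a_disj (sup_ofP _ _) (sup_ofP _ _) coli).
  exact: (piece_meet_out a_disj (sup_ofP _ _) coli).
by apply: (sup_ofP _ _).2 => p [[_ pu] _].
Qed.
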